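(* Let $G$ be a dense $K_4^3\cup e$-free $3$-graph on $[n]$ with $\lambda(G)>\frac{\sqrt3}{18}$, in which $\{1,2,3,4\}$ spans a $K_4^3$, and let $\vec x$ be an optimum weight vector for $G$. Then for every $v\in[n]$, $\omega(G_v)\ge3$ and $x_v<1-\sqrt{\frac{\sqrt3}{3}\cdot\frac{\omega(G_v)}{\omega(G_v)-1}}$. Moreover, for every $v\in[n]\setminus\{1,2,3,4\}$, $3\le\omega(G_v)\le4$; consequently $x_v<0.0694$ if $\omega(G_v)=3$ and $x_v<0.12262$ if $\omega(G_v)=4$.
   Context: $K_4^3\cup e$ is the $3$-graph on $\{1,\dots,7\}$ with edges $\{123,124,134,234,567\}$. For a $3$-graph $G$ on $[n]$, $\lambda(G,\vec x)=\sum_{e\in E(G)}\prod_{i\in e}x_i$ and $\lambda(G)=\max\{\lambda(G,\vec x):\sum_ix_i=1,x_i\ge0\}$; an optimum weight vector is a maximizer. $G$ is dense if $\lambda(G')<\lambda(G)$ for every proper subgraph $G'$. The link graph $G_v$ of $v$ is the $2$-graph on $V(G)$ with edge set $\{e\setminus\{v\}: v\in e\in E(G)\}$, and $\omega(G_v)$ is the number of vertices of a maximum complete subgraph (clique) of $G_v$. *)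

From HB Require Import structures.
From mathcomp Require Import all_boot all_order all_algebra.
From mathcomp Require Import boolp classical_sets reals.
Set Implicit Arguments. Unset Strict Implicit. Unset Printing Implicit Defensive.
Import Order.TTheory GRing.Theory Num.Theory.
Local Open Scope ring_scope.

(* A 3-graph on [n] (vertices 'I_n, paper vertex k+1 = ordinal k) is a set of
   3-element vertex sets. *)
Definition uniform3 (n : nat) (G : {set {set 'I_n}}) : Prop :=
  forall e, e \in G -> #|e| = 3%N.

Definition lam (R : realType) (n : nat) (G : {set {set 'I_n}}) (x : 'I_n -> R) : R :=
  \sum_(e in G) \prod_(i in e) x i.

Definition simplex (R : realType) (n : nat) (S : {set 'I_n}) (x : 'I_n -> R) : Prop :=
  (forall i, 0 <= x i) /\ \sum_i x i = 1 /\ (forall i, i \notin S -> x i = 0).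

Definition lagr (R : realType) (n : nat) (S : {set 'I_n}) (G : {set {set 'I_n}}) : R :=
  sup [set lam G x | x in [set x | simplex S x]]%classic.

Definition lagrangian (R : realType) (n : nat) (G : {set {set 'I_n}}) : R :=
  lagr R [set: 'I_n] G.

Definition optimum (R : realType) (n : nat) (G : {set {set 'I_n}}) (x : 'I_n -> R) : Prop :=
  simplex [set: 'I_n] x /\ forall y, simplex [set: 'I_n] y -> lam G y <= lam G x.

Definition proper_subgraph (n : nat) (G : {set {set 'I_n}})
    (S : {set 'I_n}) (E : {set {set 'I_n}}) : Prop :=
  E \subset G /\ (forall e, e \in E -> e \subset S) /\ (S != [set: 'I_n] \/ E != G).

Definition dense (R : realType) (n : nat) (G : {set {set 'I_n}}) : Prop :=
  forall S E, proper_subgraph G S E -> lagr R S E < lagrangian R G.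

(* K_4^3 u e-free: no injective f : [7] -> [n] mapping
   123,124,134,234,567 onto edges of G. *)
Definition K43e_free (n : nat) (G : {set {set 'I_n}}) : Prop :=
  ~ exists f : 'I_7 -> 'I_n, injective f /\
     [set f (inord 0); f (inord 1); f (inord 2)] \in G /\
     [set f (inord 0); f (inord 1); f (inord 3)] \in G /\
     [set f (inord 0); f (inord 2); f (inord 3)] \in G /\
     [set f (inord 1); f (inord 2); f (inord 3)] \in G /\
     [set f (inord 4); f (inord 5); f (inord 6)] \in G.

Definition link_adj (n : nat) (G : {set {set 'I_n}}) (v a b : 'I_n) : bool :=
  [&& a != b & [set v; a; b] \in G].

Definition is_clique (n : nat) (G : {set {set 'I_n}}) (v : 'I_n) (K : {set 'I_n}) : bool :=
  [forall a in K, forall b in K, (a != b) ==> link_adj G v a b].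

Definition omega (n : nat) (G : {set {set 'I_n}}) (v : 'I_n) : nat :=
  \max_(K : {set 'I_n} | is_clique G v K) #|K|.

(* {1,2,3,4} (0-based: ordinals 0..3) spans a K_4^3 *)
Definition first4_K43 (n : nat) (G : {set {set 'I_n}}) : Prop :=
  forall i j k : 'I_n, (i < 4)%N -> (j < 4)%N -> (k < 4)%N ->
    i != j -> i != k -> j != k -> [set i; j; k] \in G.

(* By density every vertex carries positive weight, so the first-order
   optimality condition gives dlam/dx_v >= 3 lam.  Twice dlam/dx_v is the
   quadratic form of the link graph G_v at the weights of the other vertices,
   which by Motzkin-Straus is at most (1 - 1/omega(G_v)) (1 - x_v)^2.  With
   lam > sqrt 3 / 18 this forces omega(G_v) >= 3 and the bound on x_v, and,
   since the weights sum to 1, also n >= 7.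
   Density also puts every pair of vertices in a common edge: otherwise moving
   weight between them would not decrease lam and would empty one of them.
   For v outside {1,2,3,4}, a clique of size 5 in G_v either contains two
   vertices outside {1,2,3,4}, which span with v an edge disjoint from the
   K_4^3, or contains all of {1,2,3,4}; then an edge through two further
   outer vertices meets {1,2,3,4} in a single vertex z, and v with the three
   other vertices of {1,2,3,4} spans a K_4^3 disjoint from that edge. *)

From HB Require Import structures.
From mathcomp Require Import all_boot all_order all_algebra.
From mathcomp Require Import boolp classical_sets reals.
From mathcomp Require Import ring lra zify.
Import Order.TTheory GRing.Theory Num.Theory.
Local Open Scope ring_scope.
Set Implicit Arguments. Unset Strict Implicit.

Section MotzkinStraus.

Variables (R : realFieldType) (T : finType).
Implicit Types (y : T -> R) (a b c : T) (t : R).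

Definition shift y a t := fun c => y c + (if c == a then t else 0).

Lemma sum_shift y a t : \sum_c shift y a t c = \sum_c y c + t.
Proof. by rewrite big_split /= -big_mkcond big_pred1_eq. Qed.

Lemma sqr_sum_le_card (A : {pred T}) y :
  (\sum_(i in A) y i) ^+ 2 <= #|A|%:R * \sum_(i in A) y i ^+ 2.
Proof.
have expand i : \sum_(j in A) (y i - y j) ^+ 2 =
    #|A|%:R * y i ^+ 2 - 2 * y i * \sum_(j in A) y j + \sum_(j in A) y j ^+ 2.
  rewrite (eq_bigr (fun j => y i ^+ 2 - 2 * y i * y j + y j ^+ 2)); last by move=> j _; ring.
  by rewrite big_split sumrB /= sumr_const -mulr_sumr [#|A|%:R * _]mulr_natl.
have : 0 <= \sum_(i in A) \sum_(j in A) (y i - y j) ^+ 2.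
  by do 2!apply: sumr_ge0 => ? _; apply: sqr_ge0.
under eq_bigr do rewrite expand.
rewrite big_split sumrB /= -mulr_sumr -mulr_suml -mulr_sumr sumr_const -mulr_natl.
rewrite expr2; lra.
Qed.

Variable adj : rel T.
Hypotheses (adj_sym : symmetric adj) (adj_irr : irreflexive adj).

Definition nbr_weight y c := \sum_d (if adj c d then y d else 0).

Definition pair_form y := \sum_c y c * nbr_weight y c.

Lemma nbr_weight_shift y a t c :
  nbr_weight (shift y a t) c = nbr_weight y c + (if adj c a then t else 0).
Proof.
have -> : (if adj c a then t else 0) =
    \sum_d (if d == a then (if adj c d then t else 0) else 0).
  by rewrite -big_mkcond big_pred1_eq.
rewrite /nbr_weight /shift -big_split /=.
by apply: eq_bigr => d _; case: (adj c d); case: (d == a); rewrite ?addr0.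
Qed.

Lemma pair_form_shift y a t :
  pair_form (shift y a t) = pair_form y + 2 * t * nbr_weight y a.
Proof.
rewrite /pair_form; under eq_bigr do rewrite nbr_weight_shift.
rewrite (eq_bigr (fun c => y c * nbr_weight y c + y c * (if adj c a then t else 0)
   + (if c == a then t * nbr_weight y a else 0))); last first.
  by move=> c _; rewrite /shift; case: eqP => [->|_]; rewrite ?adj_irr; ring.
rewrite !big_split /= -big_mkcond big_pred1_eq -addrA; congr (_ + _).
rewrite /nbr_weight mulr_sumr -big_split /= mulr_sumr.
by apply: eq_bigr => c _; rewrite adj_sym; case: (adj a c); ring.
Qed.

Lemma pair_form_le y : (forall i, 0 <= y i) ->
  pair_form y <= (\sum_i y i) ^+ 2 - \sum_i y i ^+ 2.
Proof.
move=> y0.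
have -> : (\sum_i y i) ^+ 2 - \sum_i y i ^+ 2 = \sum_c y c * \sum_(i | i != c) y i.
  rewrite expr2 mulr_suml -sumrB; apply: eq_bigr => c _.
  by rewrite [in LHS](bigD1 c) //=; ring.
apply: ler_sum => c _; apply: ler_wpM2l => //.
rewrite /nbr_weight (bigD1 c) //= adj_irr add0r.
by apply: ler_sum => d _; case: (adj c d).
Qed.

Variable w : nat.
Hypothesis card_clique_le :
  forall K : {set T}, {in K &, forall a b, a != b -> adj a b} -> (#|K| <= w)%N.

Lemma pair_form_clique_support y : (forall i, 0 <= y i) ->
  {in support y &, forall a b, a != b -> adj a b} ->
  pair_form y <= (1 - w%:R^-1) * (\sum_i y i) ^+ 2.
Proof.
move=> y0 clq.
set S := support y.
have sum_S (f : R -> R) : f 0 = 0 -> \sum_i f (y i) = \sum_(i in S) f (y i).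
  move=> f0; rewrite [RHS]big_mkcond; apply: eq_bigr => i _.
  by rewrite inE; case: eqP => // ->.
have S_le_w : (#|S| <= w)%N.
  rewrite -cardsE; apply: card_clique_le => a b; rewrite !inE; exact: clq.
have q0 : 0 <= \sum_i y i ^+ 2 by apply: sumr_ge0 => i _; apply: sqr_ge0.
have CS : (\sum_i y i) ^+ 2 <= w%:R * \sum_i y i ^+ 2.
  rewrite (sum_S id) // (sum_S (fun r => r ^+ 2)) ?expr0n //.
  apply: le_trans (sqr_sum_le_card _ _) _; rewrite ler_wpM2r ?ler_nat //.
  by apply: sumr_ge0 => i _; apply: sqr_ge0.
apply: le_trans (pair_form_le y0) _.
case: w CS => [|k] CS; first by rewrite invr0 subr0 mul1r; lra.
have k0 : 0 < k.+1%:R :> R by rewrite ltr0n.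
by rewrite mulrBl mul1r lerD2l lerN2 mulrC ler_pdivrMr // mulrC.
Qed.

Definition merge y a b := shift (shift y a (y b)) b (- y b).

Lemma merge_ge0 y a b : (forall i, 0 <= y i) -> a != b -> forall i, 0 <= merge y a b i.
Proof.
move=> y0 ab i; rewrite /merge /shift; have [->|ib] := eqVneq i b.
  by rewrite (eq_sym b a) (negbTE ab) addr0 subrr.
by rewrite addr0; case: eqP => _; rewrite ?addr0 ?addr_ge0.
Qed.

Lemma sum_merge y a b : \sum_i merge y a b i = \sum_i y i.
Proof. by rewrite !sum_shift addrK. Qed.

Lemma support_merge y a b : a != b -> a \in support y ->
  support (merge y a b) \subset [predD1 support y & b].
Proof.
move=> ab aS; apply/fintype.subsetP => i; rewrite !inE /merge /shift.
have [->|ib] := eqVneq i b; first by rewrite (eq_sym b a) (negbTE ab) addr0 subrr eqxx.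
by rewrite addr0; case: (eqVneq i a) => [->|_]; rewrite ?addr0 //; move: aS; rewrite inE.
Qed.

Lemma pair_form_merge y a b : (forall i, 0 <= y i) -> ~~ adj a b ->
  nbr_weight y b <= nbr_weight y a -> pair_form y <= pair_form (merge y a b).
Proof.
move=> y0 nab le_ba; rewrite /merge !pair_form_shift nbr_weight_shift adj_sym (negbTE nab).
have : 0 <= 2 * y b * (nbr_weight y a - nbr_weight y b).
  by rewrite mulr_ge0 ?mulr_ge0 // subr_ge0.
lra.
Qed.

(* Motzkin-Straus: merging the weight of a vertex into a non-neighbour of
   larger neighbourhood weight shrinks the support without decreasing the
   form, until the support is a clique. *)
Lemma motzkin_straus y : (forall i, 0 <= y i) ->
  pair_form y <= (1 - w%:R^-1) * (\sum_i y i) ^+ 2.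
Proof.
elim: {y}_.+1 {-2}y (ltnSn #|support y|) => // k IH y supp_lt y0.
have [clq|] := boolP [forall a in support y, forall b in support y, (a != b) ==> adj a b].
  apply: pair_form_clique_support => // a b aS bS ab.
  by move/forall_inP/(_ a aS)/forall_inP/(_ b bS): clq; rewrite ab.
case/forall_inPn => a aS /forall_inPn [b bS]; rewrite negb_imply => /andP [ab nadj].
wlog le_ba : a b aS bS ab nadj / nbr_weight y b <= nbr_weight y a.
  move=> W; case: (lerP (nbr_weight y b) (nbr_weight y a)) => h; first exact: (W a b).
  by apply: (W b a) => //; [rewrite eq_sym | rewrite adj_sym | apply: ltW].
apply: le_trans (pair_form_merge y0 nadj le_ba) _; rewrite -(sum_merge y a b).
apply: IH (merge_ge0 y0 ab); rewrite -ltnS; apply: leq_trans supp_lt.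
by rewrite ltnS (cardD1 b (support y)) bS add1n ltnS subset_leq_card // support_merge.
Qed.

End MotzkinStraus.

(* The optimality of x against (1 + s) x - s e_v, divided by s (see
   [lam_rescale]); letting s tend to 0 yields 3 lam <= dlam/dx_v. *)
Lemma le_of_rescale (R : realFieldType) (L M d : R) : 0 < d <= 1 -> 0 <= L -> 0 <= M ->
  (forall s, 0 < s <= d -> L * (3 + 3 * s + s ^+ 2) <= (1 + s) ^+ 2 * M) ->
  3 * L <= M.
Proof.
move=> /andP [d0 d1] L0 M0 H; rewrite leNgt; apply/negP => lt.
pose e := (3 * L - M) / (3 * L + 3 * M + 3).
have den : 0 < 3 * L + 3 * M + 3 by lra.
have e0 : 0 < e by rewrite divr_gt0 // subr_gt0.
have e1 : e < 1 by rewrite ltr_pdivrMr // mul1r; lra.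
have eE : e * (3 * L + 3 * M + 3) = 3 * L - M by rewrite mulfVK // gt_eqF.
pose s := d * e.
have s0 : 0 < s by rewrite mulr_gt0.
have sd : s <= d by rewrite ler_piMr // ltW.
have se : s <= e by rewrite ler_piMl // ltW.
have := H s; rewrite s0 sd => /(_ isT) h.
have h1 : (1 + s) ^+ 2 * M <= (1 + 3 * e) * M by apply: ler_wpM2r => //; nra.
have h2 : 3 * e * M < 3 * L - M by nra.
have h3 : 0 <= L * (3 * s + s ^+ 2) by apply: mulr_ge0; nra.
nra.
Qed.

Section Lagrangian.

Variables (R : realType) (n : nat).
Implicit Types (G E : {set {set 'I_n}}) (S e : {set 'I_n}) (x y z : 'I_n -> R).

Lemma lam_le_lagr S E y c : simplex S y ->
  (forall z, simplex S z -> lam E z <= c) -> lam E y <= lagr R S E.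
Proof.
move=> Sy ub; apply: ub_le_sup; last by exists y.
by exists c => r [z Sz <-]; apply: ub.
Qed.

Lemma lagrangian_optimum G x : optimum G x -> lagrangian R G = lam G x.
Proof.
move=> [Tx opt]; apply/eqP; rewrite eq_le; apply/andP; split.
  by apply: ge_sup; [exists (lam G x), x | move=> r [z Tz <-]; apply: opt].
exact: (lam_le_lagr (c := lam G x)).
Qed.

Lemma lam_ge0 G y : (forall i, 0 <= y i) -> 0 <= lam G y.
Proof. by move=> y0; apply: sumr_ge0 => e _; apply: prodr_ge0. Qed.

Lemma simplex_le1 x v : simplex [set: 'I_n] x -> x v <= 1.
Proof.
by move=> [x0 [<- _]]; rewrite (bigD1 v) //= lerDl sumr_ge0.
Qed.

(* Deleting the vertex b yields a proper subgraph whose Lagrangian is at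
   least lam G y. *)
Lemma dense_lam_lt G x y b : dense R G -> optimum G x ->
  simplex [set: 'I_n] y -> y b = 0 -> lam G y < lam G x.
Proof.
move=> Gdense xopt [y0 [y1 _]] yb; rewrite -(lagrangian_optimum xopt).
pose E := [set e in G | b \notin e].
have lamE z : lam G z = lam E z + \sum_(e in G | b \in e) \prod_(i in e) z i.
  rewrite /lam [LHS](bigID (fun e : {set _} => b \notin e)) /=; congr (_ + _).
    by apply: eq_bigl => e; rewrite inE.
  by apply: eq_bigl => e; rewrite negbK.
have proper : proper_subgraph G [set~ b] E.
  split; [|split].
  - by apply/fintype.subsetP => e; rewrite inE => /andP [].
  - move=> e; rewrite inE => /andP [_ be]; apply/fintype.subsetP => i ie.
    by rewrite !inE; apply: contraNneq be => <-.
  - by left; apply/eqP => /setP /(_ b); rewrite !inE eqxx.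
apply: le_lt_trans (Gdense _ _ proper).
have -> : lam G y = lam E y.
  by rewrite lamE big1 ?addr0 // => e /andP [_ be]; rewrite (bigD1 b) //= yb mul0r.
apply: (lam_le_lagr (c := lam G x)).
  by split=> //; split=> // i; rewrite !inE negbK => /eqP ->.
move=> z [z0 [z1 _]]; apply: le_trans (proj2 xopt z _).
  by rewrite lamE lerDl; apply: sumr_ge0 => e _; apply: prodr_ge0.
by split=> //; split=> // i; rewrite inE.
Qed.

Lemma optimum_gt0 G x v : dense R G -> optimum G x -> 0 < x v.
Proof.
move=> Gdense xopt; have [[x0 _] _] := xopt.
rewrite lt_neqAle x0 andbT; apply/eqP => xv.
by have := dense_lam_lt Gdense xopt (proj1 xopt) (esym xv); rewrite ltxx.
Qed.

(* The partial derivative dlam/dx_v of lam G at x. *)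
Definition link_weight G x v := \sum_(e in G | v \in e) \prod_(i in e :\ v) x i.

Lemma link_weight_ge0 G x v : (forall i, 0 <= x i) -> 0 <= link_weight G x v.
Proof. by move=> x0; apply: sumr_ge0 => e _; apply: prodr_ge0. Qed.

Lemma lam_rescale G x v s : uniform3 G ->
  lam G (fun i => (1 + s) * x i - (if i == v then s else 0)) =
  (1 + s) ^+ 3 * lam G x - s * (1 + s) ^+ 2 * link_weight G x v.
Proof.
move=> G3; rewrite /lam /link_weight mulr_sumr mulr_sumr big_mkcondr /= -sumrB.
apply: eq_bigr => e eG; case: ifP => ve.
  have e2 : #|e :\ v| = 2%N by move: (G3 e eG); rewrite (cardsD1 v) ve => -[].
  rewrite (big_setD1 v ve) /= eqxx (big_setD1 v ve) /=.
  rewrite (eq_bigr (fun i => (1 + s) * x i)); last first.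
    by move=> i; rewrite !inE => /andP [/negbTE -> _]; rewrite subr0.
  rewrite big_split /= prodr_const e2; ring.
rewrite subr0 -(G3 e eG) -prodr_const -big_split /=.
apply: eq_bigr => i ie; suff /negbTE -> : i != v by rewrite subr0.
by apply: contraFneq ve => <-.
Qed.

Lemma rescale_simplex x v s : simplex [set: 'I_n] x -> 0 <= s <= x v ->
  simplex [set: 'I_n] (fun i => (1 + s) * x i - (if i == v then s else 0)).
Proof.
move=> Tx /andP [s0 sx]; have [x0 [x1 _]] := Tx; have xv1 := simplex_le1 v Tx.
split; last split.
- move=> i; case: eqP => [->|_]; last by rewrite subr0 mulr_ge0 // addr_ge0.
  have : 0 <= s * (1 - x v) by rewrite mulr_ge0 // subr_ge0.
  nra.
- by rewrite sumrB -mulr_sumr x1 -big_mkcond big_pred1_eq mulr1 addrK.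
- by move=> i; rewrite inE.
Qed.

Lemma prod_transfer e x a b t : a != b -> ~~ ((a \in e) && (b \in e)) ->
  \prod_(i in e) shift (shift x a t) b (- t) i = \prod_(i in e) x i +
    t * ((if a \in e then \prod_(i in e :\ a) x i else 0)
         - (if b \in e then \prod_(i in e :\ b) x i else 0)).
Proof.
move=> ab nab; rewrite /shift.
have notin c i : c \notin e -> i \in e -> (i == c) = false.
  by move=> ce ie; apply: contraNF ce => /eqP <-.
case: (boolP (a \in e)) => ae; case: (boolP (b \in e)) => be //=.
- by move: nab; rewrite ae be.
- rewrite (big_setD1 a ae) [in RHS](big_setD1 a ae) /= eqxx (negbTE ab).
  rewrite (eq_bigr x) => [|i /setD1P [ia ie]]; first by ring.
  by rewrite (negbTE ia) notin // !addr0.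
- rewrite (big_setD1 b be) [in RHS](big_setD1 b be) /= eqxx eq_sym (negbTE ab).
  rewrite (eq_bigr x) => [|i /setD1P [ib ie]]; first by ring.
  by rewrite (negbTE ib) notin // !addr0.
- by rewrite subrr mulr0 addr0; apply: eq_bigr => i ie; rewrite !notin // !addr0.
Qed.

(* If no edge contained both a and b, moving weight between a and b would
   change lam linearly, so one direction would reach a vertex of weight 0
   without decreasing lam. *)
Lemma dense_pair_covered G x a b : dense R G -> optimum G x -> a != b ->
  exists2 e, e \in G & (a \in e) && (b \in e).
Proof.
move=> Gdense xopt ab.
have [/exists_inP //|/exists_inPn nab] := boolP [exists e in G, (a \in e) && (b \in e)].
have [[x0 [x1 _]] opt] := xopt.
pose z t := shift (shift x a t) b (- t).
have lam_z t : lam G (z t) = lam G x + t * (link_weight G x a - link_weight G x b).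
  rewrite /lam /link_weight (eq_bigr _ (fun e eG => prod_transfer x t ab (nab e eG))).
  by rewrite big_split /= -mulr_sumr sumrB -!big_mkcondr.
have xab : - x a <= x b by have := x0 a; have := x0 b; lra.
have z_simplex t : - x a <= t -> t <= x b -> simplex [set: 'I_n] (z t).
  move=> hat hbt; split; last split.
  - move=> i; rewrite /z /shift; have [->|ia] := eqVneq i a.
      by rewrite (negbTE ab) addr0; lra.
    by case: (eqVneq i b) => [->|_]; rewrite ?addr0 //; lra.
  - by rewrite !sum_shift x1; ring.
  - by move=> i; rewrite inE.
have [le_ba|lt_ab] := lerP (link_weight G x b) (link_weight G x a).
  have zb : z (x b) b = 0 by rewrite /z /shift eqxx eq_sym (negbTE ab) addr0 subrr.
  have := dense_lam_lt Gdense xopt (z_simplex _ xab (lexx _)) zb.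
  by rewrite lam_z ltNge lerDl mulr_ge0 // subr_ge0.
have za : z (- x a) a = 0 by rewrite /z /shift eqxx (negbTE ab) addr0 subrr.
have := dense_lam_lt Gdense xopt (z_simplex _ (lexx _) xab) za.
by rewrite lam_z ltNge lerDl mulr_le0 // ?oppr_le0 // subr_le0 ltW.
Qed.

(* The KKT condition at a vertex of positive weight. *)
Lemma lam_le_link_weight G x v : uniform3 G -> dense R G -> optimum G x ->
  3 * lam G x <= link_weight G x v.
Proof.
move=> G3 Gdense xopt; have [Tx opt] := xopt; have [x0 _] := Tx.
apply: (le_of_rescale (d := x v)) => [||| s /andP [s0 sx]].
- by rewrite (optimum_gt0 v Gdense xopt) simplex_le1.
- exact: lam_ge0.
- exact: link_weight_ge0.
have := opt _ (rescale_simplex (v := v) (s := s) Tx _).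
rewrite lam_rescale // (ltW s0) sx => /(_ isT) h.
rewrite -(ler_pM2l s0); nra.
Qed.

End Lagrangian.

Section LinkGraph.

Variables (n : nat) (G : {set {set 'I_n}}).
Hypothesis G3 : uniform3 G.
Implicit Types (v a b : 'I_n).

Lemma card3_uniq (T : finType) (a b c : T) : #|[set a; b; c]| = 3%N -> uniq [:: a; b; c].
Proof.
by move=> h; apply/card_uniqP; rewrite [size _]/= -h; apply: eq_card => i; rewrite !inE orbA.
Qed.

Lemma link_adj_uniq v a b : link_adj G v a b -> uniq [:: v; a; b].
Proof. by case/andP => _ /G3 /card3_uniq. Qed.

Lemma link_adjC v : symmetric (link_adj G v).
Proof.
move=> a b; rewrite /link_adj eq_sym; congr (_ && (_ \in G)).
by apply/setP => i; rewrite !inE -!orbA (orbC (i == a)).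
Qed.

Lemma link_adj_irr v : irreflexive (link_adj G v).
Proof. by move=> a; rewrite /link_adj eqxx. Qed.

Lemma link_pairs_of_edge (R : realType) (x : 'I_n -> R) v e : e \in G -> v \in e ->
  \sum_(p | link_adj G v p.1 p.2 && ([set v; p.1; p.2] == e)) x p.1 * x p.2 =
  2 * \prod_(i in e :\ v) x i.
Proof.
move=> eG ve.
have /cards2P [a0 [b0 [ab0 e_v]]] : #|e :\ v| == 2%N.
  by move: (G3 eG); rewrite (cardsD1 v) ve add1n => -[->].
have e_eq : e = [set v; a0; b0].
  apply/setP => i; rewrite !inE; have [->|iv] //= := eqVneq i v.
  by move/setP/(_ i): e_v; rewrite !inE iv.
have pairs p : link_adj G v p.1 p.2 && ([set v; p.1; p.2] == e) =
    (p == (a0, b0)) || (p == (b0, a0)).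
  case: p => a b /=; rewrite e_eq !xpair_eqE; apply/idP/idP.
    case/andP => ab /eqP e_ab; have := link_adj_uniq ab.
    rewrite /= !inE !negb_or => /and3P [/andP [va vb] ab' _].
    have [aS bS] : a \in [set a0; b0] /\ b \in [set a0; b0].
      by rewrite -e_v e_eq -e_ab !inE !eqxx !orbT !andbT (eq_sym a) (eq_sym b) va vb.
    move: aS bS ab'; rewrite !inE => /orP [] /eqP -> /orP [] /eqP ->;
      by rewrite ?eqxx /= ?orbT.
  have e_ba : [set v; b0; a0] = [set v; a0; b0].
    by apply/setP => i; rewrite !inE -!orbA (orbC (i == b0)).
  case/orP => /andP [/eqP -> /eqP ->]; rewrite /link_adj ?e_ba -e_eq eG eqxx //.
    by rewrite ab0.
  by rewrite eq_sym ab0.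
rewrite (eq_bigl _ _ pairs) (bigD1 (a0, b0)) ?eqxx //= (big_pred1 (b0, a0)) /=.
  by rewrite e_v big_setU1 ?big_set1 /= ?inE // mulrC; ring.
move=> p; case: (eqVneq p (a0, b0)) => [->|] /=; last by rewrite andbT.
by rewrite xpair_eqE (negbTE ab0).
Qed.

Lemma pair_form_link (R : realType) (x : 'I_n -> R) v :
  pair_form (link_adj G v) x = 2 * link_weight G x v.
Proof.
have -> : pair_form (link_adj G v) x = \sum_(p | link_adj G v p.1 p.2) x p.1 * x p.2.
  rewrite /pair_form /nbr_weight; under eq_bigr do rewrite mulr_sumr.
  rewrite pair_big /= [RHS]big_mkcond /=; apply: eq_bigr => p _.
  by case: ifP; rewrite ?mulr0.
rewrite (partition_big (fun p => [set v; p.1; p.2]) (fun e => (e \in G) && (v \in e))).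
  rewrite /link_weight mulr_sumr; apply: eq_bigr => e /andP [eG ve].
  by rewrite link_pairs_of_edge.
by move=> [a b] /andP [_ abG]; rewrite abG !inE eqxx.
Qed.

Lemma card_clique_le_omega v (K : {set 'I_n}) :
  {in K &, forall a b, a != b -> link_adj G v a b} -> (#|K| <= omega G v)%N.
Proof.
move=> clq; apply: (leq_bigmax_cond (F := fun K : {set 'I_n} => #|K|)).
by apply/forall_inP => a aK; apply/forall_inP => b bK; apply/implyP; apply: clq.
Qed.

Lemma omega_gt0 v : (0 < omega G v)%N.
Proof.
apply: leq_trans (card_clique_le_omega (K := [set v]) _); first by rewrite cards1.
by move=> a b /set1P -> /set1P ->; rewrite eqxx.
Qed.

Lemma omega_le_pred v : (1 < n)%N -> (omega G v <= n.-1)%N.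
Proof.
move=> n2; apply/bigmax_leqP => K /forall_inP clq.
have [vK|vK] := boolP (v \in K).
  suff /subset_leq_card : K \subset [set v].
    by rewrite cards1 => /leq_trans; apply; rewrite -subn1 subn_gt0.
  apply/fintype.subsetP => b bK; rewrite inE; apply/negPn/negP => bv.
  move/forall_inP: (clq v vK) => /(_ b bK); rewrite eq_sym bv.
  by move=> /link_adj_uniq; rewrite /= !inE eqxx.
suff /subset_leq_card : K \subset [set~ v] by rewrite cardsC1 card_ord.
by apply/fintype.subsetP => b bK; rewrite !inE; apply: contraNneq vK => <-.
Qed.

(* The link of v only involves vertices other than v, which carry the
   weight 1 - x v. *)
Lemma link_weight_le (R : realType) (x : 'I_n -> R) v : simplex [set: 'I_n] x ->
  2 * link_weight G x v <= (1 - (omega G v)%:R^-1) * (1 - x v) ^+ 2.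
Proof.
move=> [x0 [x1 _]]; rewrite -pair_form_link.
pose y := shift x v (- x v).
have yv : y v = 0 by rewrite /y /shift eqxx subrr.
have yE c : c != v -> y c = x c by move=> cv; rewrite /y /shift (negbTE cv) addr0.
have -> : pair_form (link_adj G v) x = pair_form (link_adj G v) y.
  apply: eq_bigr => c _; have [->|cv] := eqVneq c v.
    rewrite yv mul0r /nbr_weight big1 ?mulr0 // => d _.
    by case: ifP => // /link_adj_uniq; rewrite /= !inE eqxx.
  rewrite yE //; congr (_ * _); apply: eq_bigr => d _.
  case: ifP => // /link_adj_uniq; rewrite /= !inE !negb_or => /and3P [/andP [_ vd] _ _].
  by rewrite yE // eq_sym.
have -> : 1 - x v = \sum_i y i by rewrite sum_shift x1.
apply: motzkin_straus.
- exact: link_adjC.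
- exact: link_adj_irr.
- exact: card_clique_le_omega.
- by move=> i; have [->|iv] := eqVneq i v; rewrite ?yv ?yE.
Qed.

End LinkGraph.

Lemma lt_sqrt3 (R : realType) (c : R) : 0 <= c -> c ^+ 2 < 3 -> c < Num.sqrt 3.
Proof.
move=> c0 c2; rewrite ltNge; apply/negP => h; have s0 := sqrtr_ge0 (3 : R).
by have := ler_pM s0 s0 h h; rewrite -!expr2 sqr_sqrtr ?ler0n //; lra.
Qed.

Section OptimumBounds.

Variables (R : realType) (n : nat) (G : {set {set 'I_n}}) (x : 'I_n -> R).
Hypotheses (G3 : uniform3 G) (Gdense : dense R G) (xopt : optimum G x).
Hypothesis lam_gt : Num.sqrt 3 / 18 < lam G x.
(* [lra] does not see section hypotheses, hence the [have := lam_gt] below. *)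

Lemma lam_le_omega v : 6 * lam G x <= (1 - (omega G v)%:R^-1) * (1 - x v) ^+ 2.
Proof.
have := lam_le_link_weight v G3 Gdense xopt.
have := link_weight_le G3 v (proj1 xopt); lra.
Qed.

Lemma omega_ge3 v : (3 <= omega G v)%N.
Proof.
have xv0 := optimum_gt0 v Gdense xopt; have xv1 := simplex_le1 v (proj1 xopt).
have sqr_le1 : (1 - x v) ^+ 2 <= 1 by rewrite expr_le1 //; lra.
have s32 : 3 / 2 < Num.sqrt 3 :> R by apply: lt_sqrt3; lra.
have := lam_gt; have := lam_le_omega v; have := omega_gt0 G v.
case: (omega G v) => [|[|[|k]]] // _; first by rewrite invr1 subrr mul0r; lra.
have -> : 1 - 2%:R^-1 = 2^-1 :> R by field.
nra.
Qed.

Lemma sqr_one_sub_gt v :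
  Num.sqrt 3 / 3 * ((omega G v)%:R / ((omega G v)%:R - 1)) < (1 - x v) ^+ 2.
Proof.
have W3 : 3 <= (omega G v)%:R :> R by rewrite (ler_nat R 3) omega_ge3.
set W := (omega G v)%:R in W3 *.
have c0 : 0 < W / (W - 1) by apply: divr_gt0; lra.
have -> : (1 - x v) ^+ 2 = (1 - W^-1) * (1 - x v) ^+ 2 * (W / (W - 1)).
  by field; apply/andP; split; apply/eqP; lra.
rewrite ltr_pM2r //; apply: (lt_le_trans _ (lam_le_omega v)); have := lam_gt; lra.
Qed.

Lemma weight_lt v :
  x v < 1 - Num.sqrt (Num.sqrt 3 / 3 * ((omega G v)%:R / ((omega G v)%:R - 1))).
Proof.
have h := sqr_one_sub_gt v.
have a0 : 0 <= Num.sqrt 3 / 3 * ((omega G v)%:R / ((omega G v)%:R - 1)) :> R.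
  by rewrite !mulr_ge0 ?invr_ge0 ?sqrtr_ge0 ?subr_ge0 ?ler1n ?omega_gt0.
have xv1 := simplex_le1 v (proj1 xopt).
have b0 := le_lt_trans a0 h.
rewrite -ltr_sqrt // sqrtr_sqr ger0_norm in h; lra.
Qed.

(* For n <= 6, omega <= 5 pushes every weight below 1/6. *)
Lemma n_ge7 : (1 < n)%N -> (7 <= n)%N.
Proof.
move=> n2; rewrite leqNgt; apply/negP => n6.
have xv_lt v : x v < 1 / 6.
  have w5 : (omega G v <= 5)%N by apply: leq_trans (omega_le_pred G3 v n2) _; lia.
  have := sqr_one_sub_gt v; set W := (omega G v)%:R => h.
  have W3 : 3 <= W by rewrite (ler_nat R 3) omega_ge3.
  have W5 : W <= 5 by rewrite (ler_nat R _ 5).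
  have c : 5 / 4 <= W / (W - 1) by rewrite ler_pdivlMr; lra.
  have s53 : 5 / 3 < Num.sqrt 3 :> R by apply: lt_sqrt3; lra.
  have := simplex_le1 v (proj1 xopt); have := optimum_gt0 v Gdense xopt.
  nra.
have [[_ [x1 _]] _] := xopt.
have : \sum_i x i < \sum_(i : 'I_n) (1 / 6 : R).
  by apply: ltr_sum => [|i _]; [apply/hasP; exists (Ordinal (ltnW n2)) | apply: xv_lt].
rewrite x1 sumr_const card_ord -mulr_natl.
have : (n%:R : R) <= 6 by rewrite (ler_nat R n 6); lia.
lra.
Qed.

End OptimumBounds.

Lemma card_ord_lt (n m : nat) : (#|[set i : 'I_n | (i < m)%N]| <= m)%N.
Proof.
rewrite cardE -(size_map val) -[X in (_ <= X)%N](size_iota 0 m); apply: uniq_leq_size.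
  by rewrite (map_inj_uniq val_inj) enum_uniq.
by move=> k /mapP [i]; rewrite mem_enum inE mem_iota => i_m ->.
Qed.

Lemma set3_of_mem (T : finType) (e : {set T}) a b : #|e| = 3%N ->
  a \in e -> b \in e -> a != b -> exists c, e = [set a; b; c].
Proof.
move=> e3 ae be ab.
have /cards1P [c e_ab] : #|e :\ a :\ b| == 1%N.
  have bea : b \in e :\ a by rewrite !inE eq_sym ab.
  by move: e3; rewrite (cardsD1 a) ae (cardsD1 b (e :\ a)) bea !add1n => -[->].
exists c; apply/setP => i; rewrite !inE -orbA; move/setP/(_ i): e_ab; rewrite !inE.
by have [->|] //= := eqVneq i a; have [->|] //= := eqVneq i b; move=> _ _ ->.
Qed.

Ltac uniq_lia := rewrite -(map_inj_uniq val_inj) /= !inE !negb_or;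
  repeat (apply/andP; split);
  repeat match goal with H : is_true (_ != _) |- _ => rewrite -val_eqE /= in H end; lia.

Section K43eFree.

Variables (n : nat) (G : {set {set 'I_n}}).
Hypotheses (G3 : uniform3 G) (Gfree : K43e_free G) (GK4 : first4_K43 G).
Hypothesis n4 : (4 <= n)%N.
Implicit Types (v a b c i j : 'I_n).

Let first4 (k : nat) : 'I_n := Ordinal (leq_trans (ltn_pmod k (isT : 0 < 4)%N) n4).

Lemma no_K43e_copy (p0 p1 p2 p3 p4 p5 p6 : 'I_n) :
  uniq [:: p0; p1; p2; p3; p4; p5; p6] ->
  [set p0; p1; p2] \in G -> [set p0; p1; p3] \in G ->
  [set p0; p2; p3] \in G -> [set p1; p2; p3] \in G -> [set p4; p5; p6] \notin G.
Proof.
move=> s_uniq e012 e013 e023 e123; apply/negP => e456; apply: Gfree.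
exists (fun i : 'I_7 => nth p0 [:: p0; p1; p2; p3; p4; p5; p6] i); split.
  by move=> i j /eqP; rewrite nth_uniq // => /eqP /val_inj.
by rewrite !inordK.
Qed.

Lemma edge_meets_first4 a b c : [set a; b; c] \in G -> [|| a < 4, b < 4 | c < 4]%N.
Proof.
move=> abc; move: (abc) => /G3 /card3_uniq; rewrite /= !inE !negb_or.
move=> /and3P [/andP [ab ac] bc _]; apply/negPn/negP.
rewrite !negb_or -!leqNgt => /and3P [a4 b4 c4].
apply/negP: abc.
apply: (no_K43e_copy (p0 := first4 0) (p1 := first4 1) (p2 := first4 2) (p3 := first4 3));
  rewrite ?GK4 //; uniq_lia.
Qed.

Hypothesis Gcover : forall a b, a != b -> exists2 e, e \in G & (a \in e) && (b \in e).

Lemma link_not_first4 v : (7 <= n)%N -> (4 <= v)%N ->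
  ~ (forall i j, (i < 4)%N -> (j < 4)%N -> i != j -> [set v; i; j] \in G).
Proof.
move=> n7 v4 vK4.
have [a [w /and5P [a4 w4 av wv aw]]] : exists a w : 'I_n,
    [&& 4 <= a, 4 <= w, a != v, w != v & a != w]%N.
  pose o k (k7 : (k < 7)%N) : 'I_n := Ordinal (leq_trans k7 n7).
  have [v_4|v_4] := eqVneq (val v) 4%N.
    by exists (o 5%N isT), (o 6%N isT); rewrite -!val_eqE /= v_4.
  have [v_5|v_5] := eqVneq (val v) 5%N.
    by exists (o 4%N isT), (o 6%N isT); rewrite -!val_eqE /= v_5.
  by exists (o 4%N isT), (o 5%N isT); rewrite -!val_eqE /= eq_sym v_4 eq_sym v_5.
have [e eG /andP [ae we]] := Gcover (aw : a != w).
have [z e_eq] := set3_of_mem (G3 eG) ae we aw.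
rewrite e_eq in eG; move: (eG) => /G3 /card3_uniq; rewrite /= !inE !negb_or.
move=> /and3P [/andP [_ az] wz _].
have := edge_meets_first4 eG; rewrite ltnNge a4 ltnNge w4 /= => z4.
have f4_lt k : (first4 k < 4)%N := ltn_pmod k (isT : (0 < 4)%N).
apply/negP: eG.
apply: (no_K43e_copy (p0 := v) (p1 := first4 (z + 1)) (p2 := first4 (z + 2))
  (p3 := first4 (z + 3))); rewrite ?vK4 ?GK4 ?f4_lt //; first uniq_lia.
all: by rewrite -val_eqE /= eqn_modDl.
Qed.

Lemma omega_le4 v : (7 <= n)%N -> (4 <= v)%N -> (omega G v <= 4)%N.
Proof.
move=> n7 v4; apply/bigmax_leqP => K /forall_inP clqK.
have clq a b : a \in K -> b \in K -> a != b -> [set v; a; b] \in G.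
  by move=> aK bK ab; move/forall_inP: (clqK a aK) => /(_ b bK); rewrite ab => /andP [].
have [first4_sub|/subsetPn [m m4 mK]] := boolP ([set i : 'I_n | (i < 4)%N] \subset K).
  case: (link_not_first4 n7 v4) => i j i4 j4; apply: clq;
    by apply: (fintype.subsetP first4_sub); rewrite inE.
pose outer := [set i in K | 4 <= i]%N.
have outer_le1 : (#|outer| <= 1)%N.
  apply/card_le1_eqP => a b; rewrite !inE => /andP [aK a4] /andP [bK b4].
  apply/eqP; apply/negPn/negP => ab.
  have := edge_meets_first4 (clq b a bK aK ab).
  by rewrite ltnNge v4 ltnNge b4 ltnNge a4.
have K_sub : K \subset outer :|: [set i : 'I_n | (i < 4)%N] :\ m.
  apply/fintype.subsetP => i iK; rewrite !inE iK /=.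
  case: (ltnP 3 i) => //= i4; rewrite ltnS i4 andbT.
  by apply: contraNneq mK => <-.
apply: leq_trans (subset_leq_card K_sub) _; apply: leq_trans (leq_card_setU _ _) _.
have : (#|[set i : 'I_n | (i < 4)%N]| <= 4)%N := card_ord_lt n 4.
by rewrite (cardsD1 m) m4 add1n ltnS => /(leq_add outer_le1).
Qed.

End K43eFree.

Lemma sqrtr_ge (R : rcfType) (a b : R) : 0 <= b -> b ^+ 2 <= a -> b <= Num.sqrt a.
Proof. by move=> b0 ba; rewrite -(ger0_norm b0) -sqrtr_sqr ler_wsqrtr. Qed.

Lemma sqrt_bound_omega3 (R : realType) :
  1 - Num.sqrt (Num.sqrt 3 / 3 * (3%:R / (3%:R - 1))) <= 694%:R / 10000%:R :> R.
Proof.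
have s3 : 2 * (9306 / 10000) ^+ 2 < Num.sqrt 3 :> R by apply: lt_sqrt3; lra.
suff : 9306 / 10000 <= Num.sqrt (Num.sqrt 3 / 3 * (3%:R / (3%:R - 1))) :> R by lra.
by apply: sqrtr_ge; [lra | rewrite (_ : 3%:R - 1 = 2 :> R); lra].
Qed.

(* Natural-number literals are unary, so 100000 must be kept out of [lra]. *)
Lemma sqrt_bound_omega4 (R : realType) :
  1 - Num.sqrt (Num.sqrt 3 / 3 * (4%:R / (4%:R - 1))) <= 12262%:R / 100000%:R :> R.
Proof.
rewrite (_ : 100000%:R = 100%:R * 1000%:R :> R); last by rewrite -natrM.
pose b : R := 1 - 12262%:R / (100%:R * 1000%:R).
have s3 : 9 / 4 * b ^+ 2 < Num.sqrt 3 by apply: lt_sqrt3; rewrite /b; lra.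
suff : b <= Num.sqrt (Num.sqrt 3 / 3 * (4%:R / (4%:R - 1))) by rewrite /b; lra.
by apply: sqrtr_ge; [rewrite /b; lra | rewrite (_ : 4%:R - 1 = 3 :> R); lra].
Qed.

Theorem claim5p3 (R : realType) (n : nat) (G : {set {set 'I_n}}) (x : 'I_n -> R) :
  (4 <= n)%N ->
  uniform3 G ->
  dense R G ->
  K43e_free G ->
  lagrangian R G > Num.sqrt 3 / 18 ->
  first4_K43 G ->
  optimum G x ->
  (forall v : 'I_n,
     (3 <= omega G v)%N /\
     x v < 1 - Num.sqrt (Num.sqrt 3 / 3 * ((omega G v)%:R / ((omega G v)%:R - 1)))) /\
  (forall v : 'I_n, (4 <= v)%N ->
     [/\ (3 <= omega G v <= 4)%N,
         omega G v = 3%N -> x v < 694%:R / 10000%:R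
       & omega G v = 4%N -> x v < 12262%:R / 100000%:R]).
Proof.
move=> n4 G3 Gdense Gfree lam_gt GK4 xopt.
rewrite (lagrangian_optimum xopt) in lam_gt.
have w3 := omega_ge3 G3 Gdense xopt lam_gt.
have xv_lt := weight_lt G3 Gdense xopt lam_gt.
split=> [v|v v4]; first by split; [apply: w3 | apply: xv_lt].
have n7 := n_ge7 G3 Gdense xopt lam_gt (leq_trans (isT : (1 < 4)%N) n4).
have w4 := omega_le4 G3 Gfree GK4 n4 (fun a b => dense_pair_covered Gdense xopt) n7 v4.
split; first by rewrite w3 w4.
- by move=> w_3; apply: lt_le_trans (xv_lt v) _; rewrite w_3 sqrt_bound_omega3.
- by move=> w_4; apply: lt_le_trans (xv_lt v) _; rewrite w_4 sqrt_bound_omega4.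
Qed.
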